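(* Let $X \subset \mathbb{R}^d$ be a finite set of $n = |X| \geq 2$ points, and let $x^*, y^* \in X$, $x^* \neq y^*$, be a pair of distinct points minimizing $\|x - y\|^2$ over all pairs of distinct points of $X$. Let $\kappa_\sigma(x,y) = \exp\left(-\|x-y\|^2/\sigma\right)$ be the RBF kernel with bandwidth $\sigma > 0$, and suppose \[ \sigma \leq \frac{\|x^* - y^*\|^2}{\log(3n)} . \] Then, for any $k$ and any $k$-partition $\pi_1,\dots,\pi_k$ of $X$ used as the current partition, {\tt Kernel $k$-means} run with $\kappa_\sigma$ makes no cluster reassignments; that is, for every $x \in X$, if $x \in \pi_j$ then $\|\phi(x) - m_j\|^2 \leq \|\phi(x) - m_i\|^2$ for all $i = 1,\dots,k$.
   Context: Norms are Euclidean and $\log$ is the natural logarithm. A $k$-partition of $X$ is a collection of $k$ non-empty, pairwise disjoint subsets $\pi_1,\dots,\pi_k$ (clusters) whose union is $X$; $n_i = |\pi_i|$. For a positive definite kernel $\kappa$ with implicit feature map $\phi$, the feature-space centroid of cluster $\pi_i$ is $m_i = \frac{1}{n_i}\sum_{x\in\pi_i}\phi(x)$, and the squared feature-space distance is computed as \[ \|\phi(x) - m_i\|^2 = \kappa(x,x) - \frac{2\sum_{y\in\pi_i}\kappa(x,y)}{n_i} + \frac{\sum_{y,z\in\pi_i}\kappa(y,z)}{n_i^2}. \] {\tt Kernel $k$-means} is Lloyd's algorithm using these distances: starting from a $k$-partition, it repeatedly reassigns each point to the cluster whose feature-space centroid is closest to it (a point is moved out of its current cluster only if some other cluster's centroid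 is strictly closer), until no point changes cluster. *)

From HB Require Import structures.
From mathcomp Require Import all_boot all_order all_algebra.
From mathcomp Require Import reals sequences exp.
Set Implicit Arguments. Unset Strict Implicit. Unset Printing Implicit Defensive.
Import Order.TTheory GRing.Theory Num.Theory.
Local Open Scope ring_scope.

Definition sqdist (R : realType) (d : nat) (x y : 'rV[R]_d) : R :=
  \sum_(j < d) (x 0 j - y 0 j) ^+ 2.

Definition rbf (R : realType) (d : nat) (sigma : R) (x y : 'rV[R]_d) : R :=
  expR (- sqdist x y / sigma).

Definition cluster (n k : nat) (P : 'I_n -> 'I_k) (i : 'I_k) : {set 'I_n} :=
  [set b | P b == i].

(* Squared feature-space distance ||phi(x_a) - m_C||^2, computed via kernel. *)
Definition fdist (R : realType) (d n : nat) (kappa : 'rV[R]_d -> 'rV[R]_d -> R)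
    (p : 'I_n -> 'rV[R]_d) (C : {set 'I_n}) (a : 'I_n) : R :=
  kappa (p a) (p a)
  - 2 * (\sum_(b in C) kappa (p a) (p b)) / (#|C|%:R)
  + (\sum_(b in C) \sum_(c in C) kappa (p b) (p c)) / ((#|C|%:R) ^+ 2).

(* With sigma <= D / ln (3n), where D is the minimal squared distance, every
   off-diagonal kernel value is at most e = 1/(3n), while the diagonal is 1.
   For a point a in its own cluster of size m the feature distance is then at
   most 1 - 1/m + e, and for any cluster not containing a it is at least
   1 - 2e; since m <= n = 1/(3e), the first bound never exceeds the second. *)
From HB Require Import structures.
From mathcomp Require Import all_boot all_order all_algebra.
From mathcomp Require Import reals sequences exp.
From mathcomp Require Import ring lra.
Set Implicit Arguments. Unset Strict Implicit. Unset Printing Implicit Defensive.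
Import Order.TTheory GRing.Theory Num.Theory.
Local Open Scope ring_scope.

Lemma sqdistxx (R : realType) (d : nat) (x : 'rV[R]_d) : sqdist x x = 0.
Proof. by rewrite /sqdist big1 // => j _; rewrite subrr expr0n. Qed.

Lemma rbfxx (R : realType) (d : nat) (sigma : R) (x : 'rV[R]_d) :
  rbf sigma x x = 1.
Proof. by rewrite /rbf sqdistxx oppr0 mul0r expR0. Qed.

Lemma rbf_ge0 (R : realType) (d : nat) (sigma : R) (x y : 'rV[R]_d) :
  0 <= rbf sigma x y.
Proof. exact: expR_ge0. Qed.

Lemma rbf_le_inv (R : realType) (d : nat) (sigma N : R) (x y : 'rV[R]_d) :
  0 < sigma -> 0 < N -> sigma * ln N <= sqdist x y -> rbf sigma x y <= N^-1.
Proof.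
move=> sigma_gt0 N_gt0 hxy.
rewrite -[N]lnK ?posrE // -expRN /rbf ler_expR mulNr lerN2.
by rewrite ler_pdivlMr // mulrC.
Qed.

Section FeatureDistance.

Variables (R : realType) (d n : nat) (kappa : 'rV[R]_d -> 'rV[R]_d -> R).
Variables (p : 'I_n -> 'rV[R]_d) (e : R).
Hypothesis kappa_diag : forall a, kappa (p a) (p a) = 1.
Hypothesis kappa_ge0 : forall a b, 0 <= kappa (p a) (p b).
Hypothesis kappa_offdiag : forall a b, a != b -> kappa (p a) (p b) <= e.
Hypothesis e_ge0 : 0 <= e.

Lemma sum_kappa_notin_le (a : 'I_n) (C : {set 'I_n}) :
  a \notin C -> \sum_(b in C) kappa (p a) (p b) <= #|C|%:R * e.
Proof.
move=> aC; rewrite mulr_natl -sumr_const; apply: ler_sum => b bC.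
by apply: kappa_offdiag; apply: contraNneq aC => ->.
Qed.

Lemma sum_kappa_in_ge (a : 'I_n) (C : {set 'I_n}) :
  a \in C -> 1 <= \sum_(b in C) kappa (p a) (p b).
Proof.
move=> aC; rewrite (bigD1 a) //= kappa_diag lerDl.
by apply: sumr_ge0 => b _; apply: kappa_ge0.
Qed.

Lemma sum_kappa_in_le (a : 'I_n) (C : {set 'I_n}) :
  a \in C -> \sum_(b in C) kappa (p a) (p b) <= 1 + #|C|%:R * e.
Proof.
move=> aC; rewrite (bigD1 a) //= kappa_diag lerD2l mulr_natl -sumr_const.
rewrite [\sum_(b in C) e](bigD1 a) //=; apply: ler_wpDl => //.
by apply: ler_sum => b /andP[_ ba]; apply: kappa_offdiag; rewrite eq_sym.
Qed.

Lemma fdist_notin_ge (a : 'I_n) (C : {set 'I_n}) :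
  a \notin C -> 1 - 2 * e <= fdist kappa p C a.
Proof.
move=> aC; rewrite /fdist kappa_diag -mulrA.
set m : R := #|C|%:R; set S := \sum_(b in C) kappa (p a) (p b).
set T := \sum_(b in C) \sum_(c in C) _.
have S_le : S / m <= e.
  have [->|m_neq0] := eqVneq m 0; first by rewrite invr0 mulr0.
  have m_gt0 : 0 < m by rewrite lt_def m_neq0 ler0n.
  by rewrite ler_pdivrMr // mulrC /m /S; apply: sum_kappa_notin_le.
have T_ge0 : 0 <= T / m ^+ 2.
  apply: divr_ge0; last exact: exprn_ge0.
  by apply: sumr_ge0 => b _; apply: sumr_ge0 => c _; apply: kappa_ge0.
lra.
Qed.

Lemma fdist_in_le (a : 'I_n) (C : {set 'I_n}) :
  a \in C -> fdist kappa p C a <= 1 - #|C|%:R^-1 + e.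
Proof.
move=> aC; rewrite /fdist kappa_diag.
set m : R := #|C|%:R; set S := \sum_(b in C) kappa (p a) (p b).
set T := \sum_(b in C) \sum_(c in C) _.
have m_gt0 : 0 < m by rewrite ltr0n card_gt0; apply/set0Pn; exists a.
have T_le : T <= m * (1 + m * e).
  rewrite /m mulr_natl -sumr_const; apply: ler_sum => b bC.
  exact: sum_kappa_in_le.
have -> : T / m ^+ 2 = T / m / m by rewrite expr2 invfM mulrA.
have T_le' : T / m / m <= m^-1 + e.
  rewrite !ler_pdivrMr //; suff -> : (m^-1 + e) * m * m = m * (1 + m * e) by [].
  by field; rewrite gt_eqF.
have S_ge : m^-1 <= S / m.
  have m_inv_ge0 : 0 <= m^-1 by rewrite invr_ge0 ltW.
  by have := ler_wpM2r m_inv_ge0 (sum_kappa_in_ge aC); rewrite mul1r.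
rewrite -mulrA; lra.
Qed.

Lemma fdist_in_le_notin (a : 'I_n) (C C' : {set 'I_n}) :
  a \in C -> a \notin C' -> 3 * #|C|%:R * e <= 1 ->
  fdist kappa p C a <= fdist kappa p C' a.
Proof.
move=> aC aC' small_e.
apply: le_trans (fdist_in_le aC) _; apply: le_trans (fdist_notin_ge aC').
have m_gt0 : 0 < #|C|%:R :> R by rewrite ltr0n card_gt0; apply/set0Pn; exists a.
suff : 3 * e <= #|C|%:R^-1 by lra.
by rewrite -[_^-1]mul1r ler_pdivlMr // mulrAC.
Qed.

End FeatureDistance.

Theorem theorem1 (R : realType) (d n k : nat) (p : 'I_n -> 'rV[R]_d)
  (p_inj : injective p) (hn : (2 <= n)%N)
  (xs ys : 'I_n) (hxy : xs != ys)
  (hmin : forall a b : 'I_n, a != b -> sqdist (p xs) (p ys) <= sqdist (p a) (p b))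
  (sigma : R) (hsig0 : 0 < sigma)
  (hsig : sigma <= sqdist (p xs) (p ys) / ln (3 * n%:R))
  (P : 'I_n -> 'I_k) (hP : forall i : 'I_k, exists a : 'I_n, P a = i) :
  forall (a : 'I_n) (i : 'I_k),
    fdist (rbf sigma) p (cluster P (P a)) a <= fdist (rbf sigma) p (cluster P i) a.
Proof.
move=> a i.
have [->|i_neq] := eqVneq i (P a); first by [].
have n_ge2 : 2 <= n%:R :> R by rewrite ler_nat.
have lnN_gt0 : 0 < ln (3 * n%:R : R) by apply: ln_gt0; lra.
have rbf_offdiag b c : b != c -> rbf sigma (p b) (p c) <= (3 * n%:R)^-1.
  move=> bc; apply: rbf_le_inv => //; first lra.
  by apply: le_trans (hmin _ _ bc); rewrite -ler_pdivlMr.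
have e_ge0 : 0 <= (3 * n%:R : R)^-1 by rewrite invr_ge0; lra.
have small_e : 3 * #|cluster P (P a)|%:R * (3 * n%:R)^-1 <= 1 :> R.
  rewrite ler_pdivrMr ?mul1r ?ler_pM2l ?ler_nat; try lra.
  by apply: leq_trans (max_card _) _; rewrite card_ord.
have a_own : a \in cluster P (P a) by rewrite inE.
have a_notin : a \notin cluster P i by rewrite inE eq_sym.
exact: (fdist_in_le_notin (fun b => rbfxx sigma (p b))
          (fun b c => rbf_ge0 sigma (p b) (p c)) rbf_offdiag e_ge0 a_own a_notin small_e).
Qed.
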